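(* For every $d\ge 3$, $\mu_t(\mathit{CCC}_d)=0$; that is, the only total mutual-visibility set of $\mathit{CCC}_d$ is the empty set.
   Context: Binary strings $x=x_0\cdots x_{d-1}$ have positions $0,\dots,d-1$ from the left; $x(i)$ is $x$ with bit $i$ complemented. $\mathit{CCC}_d$ ($d\ge 3$) has vertex set $\{[\ell,x]:\ell\in\{0,\dots,d-1\},\ x\in\{0,1\}^d\}$; $[\ell,x]$ and $[\ell',x']$ are adjacent iff either $x=x'$ and $\ell'\equiv\ell\pm1\pmod d$, or $\ell=\ell'$ and $x'=x(\ell)$. For a connected graph $G$ and $X\subseteq V(G)$, two vertices $x,y$ are $X$-visible if some shortest $x,y$-path has no internal vertex in $X$. $X$ is a total mutual-visibility set if every two vertices of $V(G)$ are $X$-visible; $\mu_t(G)$ is the maximum size of a total mutual-visibility set. *)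

From mathcomp Require Import all_boot.
Set Implicit Arguments. Unset Strict Implicit. Unset Printing Implicit Defensive.

(* Vertices of CCC_d: pairs [l, x] with l in {0..d-1} and x a binary string
   of length d, represented as a function from positions 'I_d to bool. *)
Definition cccV (d : nat) : finType := ('I_d * {ffun 'I_d -> bool})%type.

Definition flip (d : nat) (x : {ffun 'I_d -> bool}) (i : 'I_d) : {ffun 'I_d -> bool} :=
  [ffun j => if j == i then ~~ x j else x j].

Definition ccc_adj (d : nat) : rel (cccV d) := fun u v =>
  ((u.2 == v.2) &&
     ((val v.1 == (val u.1).+1 %% d) || (val u.1 == (val v.1).+1 %% d)))
  || ((u.1 == v.1) && (v.2 == flip u.2 u.1)).

Section Graph.
Variables (T : finType) (e : rel T).

(* p is a walk from x to y: x :: p is an e-path ending in y; its length is size p *)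
Definition is_walk (x : T) (p : seq T) (y : T) : Prop :=
  path e x p /\ last x p = y.

(* shortest x,y-path: a walk of minimum length (such walks are paths) *)
Definition is_shortest (x : T) (p : seq T) (y : T) : Prop :=
  is_walk x p y /\ forall q, is_walk x q y -> size p <= size q.

(* internal vertices of the walk x :: p (all vertices except the two ends) *)
Definition internal (p : seq T) : seq T := take (size p).-1 p.

Definition visible (X : {set T}) (x y : T) : Prop :=
  exists p, is_shortest x p y /\ all (fun v => v \notin X) (internal p).

Definition total_mutual_visibility (X : {set T}) : Prop :=
  forall x y, visible X x y.
End Graph.

From mathcomp Require Import all_boot.
From mathcomp Require Import zify.
Set Implicit Arguments. Unset Strict Implicit. Unset Printing Implicit Defensive.

(* Two general graph facts do all the work.
   - In a connected finite graph every pair of vertices has a shortest walk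
     ([exists_shortest]); hence the empty set is a total mutual-visibility set.
   - If x and y are at distance exactly 2 and v is their only common
     neighbour, then x and y are not X-visible for any X containing v
     ([unique_midpoint_invisible]).
   For CCC_d we then prove
   - connectivity (d >= 1): walk along the cycle of a vertex and fix the
     differing bits one at a time ([ccc_connect]);
   - every vertex v = [l, x] is the unique common neighbour of the
     non-adjacent vertices [l, x(l)] and [l+1, x] (d >= 2, [ccc_midpoint_unique]).
   So any nonempty X fails to be a total mutual-visibility set. *)

Section ShortestWalks.
Variables (T : finType) (e : rel T).

(* Boolean form of "there is an x,y-walk of length n", so that a minimum
   length can be selected with [ex_minn]. *)
Definition has_walk_of_size (x y : T) (n : nat) : bool :=
  [exists t : n.-tuple T, path e x t && (last x t == y)].

Lemma has_walk_of_sizeP x y n :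
  reflect (exists2 p, is_walk e x p y & size p = n) (has_walk_of_size x y n).
Proof.
apply: (iffP existsP) => [[t /andP [Hp /eqP Hl]]|[p [Hp Hl] Hs]].
  by exists t; [split | rewrite size_tuple].
by subst n; exists (in_tuple p); rewrite Hp Hl eqxx.
Qed.

Lemma exists_shortest x y : connect e x y -> exists p, is_shortest e x p y.
Proof.
move=> /connectP [p0 Hp0 Hl0].
have Hex : exists n, has_walk_of_size x y n.
  by exists (size p0); apply/has_walk_of_sizeP; exists p0.
case: (ex_minnP Hex) => n /has_walk_of_sizeP [p Hw <-] Hmin.
exists p; split=> // q Hq; apply: Hmin; apply/has_walk_of_sizeP; by exists q.
Qed.

Lemma connected_empty_visibility :
  (forall x y, connect e x y) -> total_mutual_visibility e set0.
Proof.
move=> Hconn x y; have [p Hp] := exists_shortest (Hconn x y).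
by exists p; split=> //; apply/allP => w _; rewrite in_set0.
Qed.

(* If v is the unique common neighbour of two distinct non-adjacent vertices
   x and y, every shortest x,y-walk passes through v. *)
Lemma unique_midpoint_invisible (X : {set T}) x v y :
  x != y -> ~~ e x y -> e x v -> e v y ->
  (forall w, e x w -> e w y -> w = v) ->
  v \in X -> ~ visible e X x y.
Proof.
move=> Hxy Hnadj Hxv Hvy Huniq HvX [p [[[Hpath Hlast] Hmin] Hint]].
have Hsize : size p <= 2 by apply: (Hmin [:: v; y]); split; rewrite //= Hxv Hvy.
clear Hmin; case: p Hpath Hlast Hsize Hint => [|a [|b [|c p]]] //=.
- by move=> _ Hyx; rewrite Hyx eqxx in Hxy.
- by rewrite andbT => Hxa Hay; rewrite -Hay Hxa in Hnadj.
move=> /and3P [Hxa Hab _] Hb _; rewrite andbT; subst b.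
by rewrite (Huniq a Hxa Hab) HvX.
Qed.

End ShortestWalks.

Section Flip.
Variable d : nat.
Implicit Types (x : {ffun 'I_d -> bool}) (i j : 'I_d).

Lemma flip_same x i : flip x i i = ~~ x i.
Proof. by rewrite /flip ffunE eqxx. Qed.

Lemma flip_other x i j : j != i -> flip x i j = x j.
Proof. by rewrite /flip ffunE => /negbTE ->. Qed.

Lemma flip_neq x i : flip x i != x.
Proof. by apply/eqP => /ffunP /(_ i); rewrite flip_same; case: (x i). Qed.

Lemma flipK x i : flip (flip x i) i = x.
Proof. by apply/ffunP => j; rewrite !ffunE; case: eqP => // ->; rewrite negbK. Qed.

End Flip.

Section Connectivity.
Variable d : nat.
Hypothesis d_gt0 : 0 < d.
Implicit Types (x y : {ffun 'I_d -> bool}) (l m : 'I_d).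

Lemma ccc_adj_cycle l x : ccc_adj (l, x) (ordS l, x).
Proof. by rewrite /ccc_adj /= !eqxx. Qed.

Lemma ccc_adj_cube l x : ccc_adj (l, x) (l, flip x l).
Proof. by rewrite /ccc_adj /= !eqxx orbT. Qed.

Lemma val_iter_ordS k l : val (iter k (@ordS d) l) = (l + k) %% d.
Proof.
elim: k => [|k IH] /=; first by rewrite addn0 modn_small.
by rewrite IH -[((l + k) %% d).+1]addn1 modnDml addn1 addnS.
Qed.

Lemma ccc_connect_cycle l m x : connect (@ccc_adj d) (l, x) (m, x).
Proof.
have -> : m = iter (m + d - l) (@ordS d) l.
  apply: val_inj; rewrite val_iter_ordS.
  have -> : l + (m + d - l) = m + d by have := ltn_ord l; lia.
  by rewrite modnDr modn_small.
elim: (m + d - l) => [|k IH] /=; first exact: connect0.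
exact: connect_trans IH (connect1 (ccc_adj_cycle _ _)).
Qed.

Lemma ccc_connect_bits n l x y :
  #|[set j | x j != y j]| <= n -> connect (@ccc_adj d) (l, x) (l, y).
Proof.
elim: n l x => [|n IH] l x Hdiff.
  suff -> : x = y by exact: connect0.
  apply/ffunP => j; apply/eqP/negPn; apply: contraTN isT => Hj.
  by move: Hdiff; rewrite leqn0 cards_eq0 => /eqP/setP/(_ j); rewrite !inE Hj.
have [Hnone|[i Hi]] := set_0Vmem [set j | x j != y j].
  by apply: IH; rewrite Hnone cards0.
have Hdiff' : #|[set j | flip x i j != y j]| <= n.
  have -> : [set j | flip x i j != y j] = [set j | x j != y j] :\ i.
    apply/setP => j; rewrite !inE; have [->|Hji] /= := eqVneq j i.
      by move: Hi; rewrite inE flip_same; case: (x i); case: (y i).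
    by rewrite flip_other.
  by move: Hdiff; rewrite (cardsD1 i) Hi.
apply: connect_trans (ccc_connect_cycle l i x) _.
apply: connect_trans (connect1 (ccc_adj_cube i x)) _.
exact: connect_trans (IH i _ Hdiff') (ccc_connect_cycle i l y).
Qed.

Lemma ccc_connect (u v : cccV d) : connect (@ccc_adj d) u v.
Proof.
case: u v => l x [m y].
exact: connect_trans (ccc_connect_bits l (leqnn _)) (ccc_connect_cycle l m y).
Qed.

End Connectivity.

Section Midpoint.
Variable d : nat.
Hypothesis d_gt1 : 1 < d.
Variables (l : 'I_d) (x : {ffun 'I_d -> bool}).

Lemma ordS_neq : ordS l != l.
Proof.
apply/eqP => /(congr1 val) /=; have Hl := ltn_ord l.
have [Hlt|Hge] := ltnP l.+1 d; first by rewrite modn_small //; lia.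
have -> : l.+1 = d by lia.
by rewrite modnn; lia.
Qed.

Lemma ccc_midpoint_adj :
  ccc_adj (l, flip x l) (l, x) /\ ccc_adj (l, x) (ordS l, x).
Proof.
split; last exact: ccc_adj_cycle.
by have := ccc_adj_cube l (flip x l); rewrite flipK.
Qed.

Lemma ccc_midpoint_ends :
  (l, flip x l) != (ordS l, x) :> cccV d /\
  ~~ ccc_adj (l, flip x l) (ordS l, x).
Proof.
have l_neq_ordS : (l == ordS l) = false by rewrite eq_sym (negbTE ordS_neq).
split; first by rewrite xpair_eqE l_neq_ordS.
by rewrite /ccc_adj /= (negbTE (flip_neq x l)) l_neq_ordS.
Qed.

Lemma ccc_midpoint_unique (w : cccV d) :
  ccc_adj (l, flip x l) w -> ccc_adj w (ordS l, x) -> w = (l, x).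
Proof.
case: w => m z; rewrite /ccc_adj /=.
case/orP=> [/andP [/eqP <- _]|/andP [/eqP <- /eqP ->]]; last by rewrite flipK.
case/orP=> [/andP [Hflip _]|/andP [/eqP Hm /eqP Hx]].
  by rewrite (negbTE (flip_neq x l)) in Hflip.
have := congr1 (fun f : {ffun 'I_d -> bool} => f l) Hx.
rewrite Hm flip_other 1?eq_sym ?ordS_neq // flip_same.
by case: (x l).
Qed.

End Midpoint.

Theorem corollary4p5 (d : nat) (hd : 3 <= d) :
  total_mutual_visibility (@ccc_adj d) set0 /\
  forall X : {set cccV d}, total_mutual_visibility (@ccc_adj d) X -> X = set0.
Proof.
have d_gt1 : 1 < d by lia.
split; first exact/connected_empty_visibility/ccc_connect/ltnW.
move=> X HX; apply/setP => -[l x]; rewrite in_set0; apply/negP => Hv.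
have [Huv Hvw] := ccc_midpoint_adj l x.
have [Huw Hnadj] := ccc_midpoint_ends d_gt1 l x.
apply: (unique_midpoint_invisible Huw Hnadj Huv Hvw _ Hv (HX _ _)).
exact: ccc_midpoint_unique.
Qed.
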